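(* Let $N\ge 3$ be an integer, let $\Delta\theta^*=2\pi/N$, and let $P\neq 0$ be a real constant. Let $(\theta_k)_{k\ge1}$ and $(\omega_k)_{k\ge1}$ be real sequences with $\omega_k>0$ for all $k$, satisfying for every $k\ge 1$ $$\theta_{k+1}=\theta_k+\Delta\theta^*,\qquad \omega_{k+1}-\omega_k=P\sin\theta_k\left[\frac{1}{\omega_k}+\frac{1}{\omega_{k+1}}\right],$$ and the assumption $\omega_k^2>|P|$ for every $k\ge1$. If $\theta_1=\Delta\theta^*/2$, then the solution is periodic with period $N$: for every $k\ge1$, $\theta_{k+N}=\theta_k+2\pi$ and $\omega_{k+N}=\omega_k$.
   Context: This is the ''discrete zero dynamics'' of a devil-stick with parameter $\phi=\pm\pi/2$; in the paper $P=\frac{g(\Delta\theta^* )^2}{2R\sin(\Delta\theta^* )}$ if $\phi=-\pi/2$ and $P=-\frac{g(\Delta\theta^* )^2}{2R\sin(\Delta\theta^* )}$ if $\phi=\pi/2$, where $g>0$ and $R>0$ are constants. The hypothesis $\omega_k^2>|P|$ for all $k$ is the paper's Assumption 1. *)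

From Stdlib Require Import Reals.

(* The recurrence can be rewritten as
     omega_(k+1) - c_k / omega_(k+1) = omega_k + c_k / omega_k,   c_k = P sin theta_k,
   and since omega^2 > |P| >= |c| the map x |-> x + e/x is injective on the omega's
   for every |e| <= |P|: each side determines the next term uniquely.  With
   theta_1 = Delta/2 the forcing is odd about the midpoint, c_(N+1-k) = -c_k, so
   running the recurrence inward from both ends gives omega_k = omega_(N+2-k); in
   particular omega_(N+1) = omega_1.  As c is N-periodic, uniqueness of the forward
   step then propagates omega_(k+N) = omega_k to all k. *)

From Stdlib Require Import Reals Wf_nat Lra Lia Psatz.
Open Scope R_scope.

Lemma add_div_inj (x y e : R) :
  0 < x -> 0 < y -> e < x * y -> x + e / x = y + e / y -> x = y.
Proof.
  intros Hx Hy He Hxy.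
  assert (Hfactor : (x - y) * (x * y - e) = 0).
  { transitivity ((x + e / x) * (x * y) - (y + e / y) * (x * y)).
    - field; lra.
    - rewrite Hxy; ring. }
  apply Rmult_integral in Hfactor; lra.
Qed.

Lemma mult_gt_of_sqr_gt (Q x y : R) :
  0 <= Q -> 0 < x -> 0 < y -> Q < x ^ 2 -> Q < y ^ 2 -> Q < x * y.
Proof.
  intros HQ Hx Hy Hx2 Hy2.
  destruct (Rlt_or_le Q (x * y)) as [Hlt | Hle]; [exact Hlt |].
  assert (x * y * (x * y) <= Q * Q) by (apply Rmult_le_compat; nra).
  nra.
Qed.

Lemma arith_seq_closed (u : nat -> R) (d : R) :
  (forall k, (1 <= k)%nat -> u (S k) = u k + d) ->
  forall i, u (S i) = u 1%nat + INR i * d.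
Proof.
  intros Hu i; induction i as [| i IH].
  - simpl; ring.
  - rewrite Hu by lia. rewrite IH, S_INR. ring.
Qed.

Lemma arith_seq_shift (u : nat -> R) (d : R) :
  (forall k, (1 <= k)%nat -> u (S k) = u k + d) ->
  forall k n, (1 <= k)%nat -> u (k + n)%nat = u k + INR n * d.
Proof.
  intros Hu k n Hk.
  destruct k as [| i]; [lia |].
  rewrite Nat.add_succ_l, (arith_seq_closed u d Hu (i + n)),
    (arith_seq_closed u d Hu i), plus_INR. ring.
Qed.

Lemma arith_seq_add (u : nat -> R) (d : R) :
  (forall k, (1 <= k)%nat -> u (S k) = u k + d) ->
  forall a b n, (1 <= a)%nat -> (1 <= b)%nat -> (a + b = n + 1)%nat ->
  u a + u b = 2 * u 1%nat + (INR n - 1) * d.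
Proof.
  intros Hu a b n Ha Hb Hab.
  destruct a as [| i], b as [| j]; try lia.
  assert (Hn : INR n = INR i + INR j + 1).
  { replace n with (i + j + 1)%nat by lia. rewrite !plus_INR. simpl; ring. }
  rewrite (arith_seq_closed u d Hu i), (arith_seq_closed u d Hu j), Hn. ring.
Qed.

Section Reflected_recurrence.

Variables (N : nat) (Q : R) (c omega : nat -> R).

Hypothesis omega_pos : forall k, (1 <= k)%nat -> 0 < omega k.
Hypothesis omega_sqr_gt : forall k, (1 <= k)%nat -> Q < omega k ^ 2.
Hypothesis c_bound : forall k, (1 <= k)%nat -> Rabs (c k) <= Q.
Hypothesis omega_step : forall k, (1 <= k)%nat ->
  omega (S k) - omega k = c k * (/ omega k + / omega (S k)).
Hypothesis c_antisym : forall a b, (1 <= a)%nat -> (1 <= b)%nat ->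
  (a + b = N + 1)%nat -> c b = - c a.
Hypothesis c_periodic : forall k, (1 <= k)%nat -> c (k + N)%nat = c k.

Lemma omega_step_balanced k : (1 <= k)%nat ->
  omega (S k) + - c k / omega (S k) = omega k + c k / omega k.
Proof. intros Hk. pose proof (omega_step k Hk). unfold Rdiv. lra. Qed.

Lemma omega_eq_of_balanced e j k : (1 <= j)%nat -> (1 <= k)%nat -> Rabs e <= Q ->
  omega j + e / omega j = omega k + e / omega k -> omega j = omega k.
Proof.
  intros Hj Hk He.
  apply add_div_inj; auto.
  assert (Q < omega j * omega k).
  { apply mult_gt_of_sqr_gt; auto. pose proof (Rabs_pos e); lra. }
  pose proof (Rle_abs e); lra.
Qed.

Lemma omega_forward_step a b : (1 <= a)%nat -> (1 <= b)%nat ->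
  c b = c a -> omega b = omega a -> omega (S b) = omega (S a).
Proof.
  intros Ha Hb Hc Hw.
  apply (omega_eq_of_balanced (- c a)); try lia.
  - rewrite Rabs_Ropp; auto.
  - rewrite <- Hc at 1. rewrite !omega_step_balanced by lia. congruence.
Qed.

Lemma omega_reflect_step a b : (1 <= a)%nat -> (1 <= b)%nat ->
  c b = - c a -> omega b = omega (S a) -> omega (S b) = omega a.
Proof.
  intros Ha Hb Hc Hw.
  apply (omega_eq_of_balanced (c a)); try lia; auto.
  transitivity (omega (S a) + - c a / omega (S a)).
  - replace (c a) with (- c b) at 1 by lra.
    rewrite omega_step_balanced by lia. now rewrite Hc, Hw.
  - apply omega_step_balanced; lia.
Qed.

Lemma omega_reflect m a : (1 <= a)%nat -> (a + (a + m) = N + 2)%nat ->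
  omega (a + m)%nat = omega a.
Proof.
  revert a; induction m as [m IH] using lt_wf_ind.
  intros a Ha Hm.
  destruct m as [| [| m]].
  - now rewrite Nat.add_0_r.
  - assert (Hc0 : c a = 0) by (pose proof (c_antisym a a Ha Ha ltac:(lia)); lra).
    replace (a + 1)%nat with (S a) by lia.
    pose proof (omega_step a Ha) as Hs. rewrite Hc0 in Hs. lra.
  - replace (a + S (S m))%nat with (S (a + S m)) by lia.
    apply omega_reflect_step; try lia.
    + apply c_antisym; lia.
    + replace (a + S m)%nat with (S a + m)%nat by lia.
      apply IH; lia.
Qed.

Lemma omega_periodic k : (1 <= k)%nat -> omega (k + N)%nat = omega k.
Proof.
  intros Hk; induction k as [| k IH]; [lia |].
  destruct (Nat.eq_dec k 0) as [-> | Hk0].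
  - apply (omega_reflect N 1%nat); lia.
  - apply (omega_forward_step k (k + N)%nat); try lia.
    + apply c_periodic; lia.
    + apply IH; lia.
Qed.

End Reflected_recurrence.

Theorem lemma2 (N : nat) (P : R) (theta omega : nat -> R) :
  (3 <= N)%nat ->
  P <> 0 ->
  (forall k, (1 <= k)%nat -> 0 < omega k) ->
  (forall k, (1 <= k)%nat -> theta (S k) = theta k + 2 * PI / INR N) ->
  (forall k, (1 <= k)%nat ->
     omega (S k) - omega k = P * sin (theta k) * (/ omega k + / omega (S k))) ->
  (forall k, (1 <= k)%nat -> omega k ^ 2 > Rabs P) ->
  theta 1%nat = (2 * PI / INR N) / 2 ->
  forall k, (1 <= k)%nat ->
    theta (k + N)%nat = theta k + 2 * PI /\ omega (k + N)%nat = omega k.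
Proof.
  intros HN _ Hpos Htheta Hstep Hsqr Htheta1 k Hk.
  set (d := 2 * PI / INR N) in *.
  assert (HNd : INR N * d = 2 * PI).
  { assert (0 < INR N) by (apply lt_0_INR; lia). unfold d; field; lra. }
  assert (Hshift : forall j, (1 <= j)%nat -> theta (j + N)%nat = theta j + 2 * PI).
  { intros j Hj. rewrite (arith_seq_shift theta d Htheta) by exact Hj. lra. }
  split; [now apply Hshift |].
  apply (omega_periodic N (Rabs P) (fun j => P * sin (theta j))); try lia; auto.
  - intros j _. rewrite Rabs_mult.
    pose proof (Rabs_pos P). pose proof (SIN_bound (theta j)).
    assert (Rabs (sin (theta j)) <= 1) by (apply Rabs_le; lra).
    nra.
  - intros a b Ha Hb Hab.
    assert (Htb : theta b = 2 * PI - theta a).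
    { pose proof (arith_seq_add theta d Htheta a b N Ha Hb Hab). lra. }
    rewrite Htb, sin_minus, sin_2PI, cos_2PI. ring.
  - intros j Hj. rewrite Hshift, sin_plus, sin_2PI, cos_2PI by exact Hj. ring.
Qed.
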